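(* Let $1\le n\le L$ and $I\subseteq\{1,\dots,n\}$. The set $\Omega^I_{L,n}$ is stable under the dynamics on $\Omega_{L,n}$ from which the transitions (T3) and (T4) with $k\in I$ are excluded: if $w\in\Omega^I_{L,n}$ and $w\to w'$ is a transition of type (T1) or (T2) (any $k$), or of type (T3) or (T4) with $k\notin I$, then $w'\in\Omega^I_{L,n}$.
   Context: Particle labels are taken modulo $n$, positions modulo $L$. $\Omega_{L,n}$ is the set of words $w_1\cdots w_L$ on the ring $\mathbb{Z}/L\mathbb{Z}$ over the alphabet $\{\bullet_1,\dots,\bullet_n,\Box_1,\dots,\Box_n\}$ in which each $\bullet_k$ occurs exactly once, the $\bullet_1,\dots,\bullet_n$ appear in this cyclic order, and the remaining $L-n$ letters are arbitrary $\Box_i$'s. Transitions (displayed segments are consecutive positions, rest unchanged, $C$ a possibly empty word in the $\Box$-letters): (T1) $\bullet_k\Box_i \to \Box_i\bullet_k$ at rate $p_k$, if $i\neq k$; (T2) $\bullet_{k-1}\,C\,\bullet_k\Box_k \to \bullet_{k-1}\Box_{k-1}\,C\,\bullet_k$ at rate $p_k$; (T3) $\Box_i\bullet_k \to \bullet_k\Box_i$ at rate $q_k$, if $i\neq k$; (T4) $\Box_k\bullet_k\,C\,\bullet_{k+1} \to \bullet_k\,C\,\Box_{k+1}\bullet_{k+1}$ at rate $q_k$. Weights: let $b_k$ be the position of $\bullet_k$ and $C_k$ the set of positions strictly between $b_k$ and $b_{k+1}$ going cyclically forward ($b_{n+1}=b_1$). For $i,k\in\{1,\dots,n\}$ set $w_\Box(i,k)=p_1\cdots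 p_{i-1}q_{i+1}\cdots q_kp_{k+1}\cdots p_n$ if $i\le k$ and $w_\Box(i,k)=q_1\cdots q_kp_{k+1}\cdots p_{i-1}q_{i+1}\cdots q_n$ if $k<i$ (empty products are $1$), as monomials in indeterminates. The weight is the monomial $\mathrm{wt}(w)=\prod_{k=1}^n\prod_{j\in C_k}w_\Box(i_j,k)$ where $w_j=\Box_{i_j}$. $\Omega^I_{L,n}$ is the set of $w\in\Omega_{L,n}$ whose weight monomial contains no $q_k$ with $k\in I$ (i.e. $\mathrm{wt}(w)\ne0$ when $q_k=0$ for $k\in I$ and all other rates are positive). *)

From mathcomp Require Import all_boot.
Set Implicit Arguments. Unset Strict Implicit. Unset Printing Implicit Defensive.

(* Letters: Bul k = \bullet_k, Box i = \Box_i. Labels are natural numbers, the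
   paper's labels 1..n are used verbatim. *)
Inductive letter := Bul of nat | Box of nat.

Definition letter_label (x : letter) : nat := match x with Bul k => k | Box k => k end.
Definition is_bul (k : nat) (x : letter) : bool :=
  match x with Bul k' => k' == k | Box _ => false end.
Definition is_box (x : letter) : bool := match x with Box _ => true | _ => false end.
Definition box_label (x : letter) : nat := match x with Box i => i | Bul _ => 0 end.

Definition prevl (n k : nat) : nat := if k == 1 then n else k.-1.
Definition nextl (n k : nat) : nat := if k == n then 1 else k.+1.

(* A cyclic word on Z/LZ is a sequence of length L; positions are read mod L. *)
Definition at_ (w : seq letter) (x : nat) : letter := nth (Box 0) w (x %% size w).

Definition bpos (w : seq letter) (k : nat) : nat := find (is_bul k) w.

Definition Omega (L n : nat) (w : seq letter) : Prop :=
  [/\ size w = L,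
      all (fun x => 1 <= letter_label x <= n) w,
      (forall k, 1 <= k <= n -> count (is_bul k) w = 1) &
      (* the bullets appear in the cyclic order 1,2,...,n *)
      (forall k1 k2, 1 <= k1 -> k1 < k2 -> k2 <= n ->
         (bpos w k1 + L - bpos w 1) %% L < (bpos w k2 + L - bpos w 1) %% L)].

(* Forward cyclic distance from position a to position b on Z/LZ, in 1..L
   (equal to L when a = b, i.e. the full turn). *)
Definition cdist (L a b : nat) : nat :=
  let r := (b + L - a) %% L in if r == 0 then L else r.

(* Monomials in the indeterminates p_1..p_n, q_1..q_n, represented by their
   exponent vectors (exponent of p_m, exponent of q_m). *)
Definition monomial := ((nat -> nat) * (nat -> nat))%type.
Definition mone : monomial := (fun _ => 0, fun _ => 0).
Definition mmul (a b : monomial) : monomial :=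
  (fun m => a.1 m + b.1 m, fun m => a.2 m + b.2 m).

Definition wbox (n i k : nat) : monomial :=
  (fun m => nat_of_bool ((1 <= m <= n) &&
              (if i <= k then (m < i) || (k < m) else (k < m) && (m < i))),
   fun m => nat_of_bool ((1 <= m <= n) &&
              (if i <= k then (i < m) && (m <= k) else (m <= k) || (i < m)))).

(* wt(w) = prod_k prod_{j in C_k} w_Box(i_j, k); C_k = positions strictly
   between b_k and b_{k+1} going cyclically forward. *)
Definition wt (L n : nat) (w : seq letter) : monomial :=
  \big[mmul/mone]_(1 <= k < n.+1)
    \big[mmul/mone]_(1 <= t < cdist L (bpos w k) (bpos w (nextl n k)))
       wbox n (box_label (at_ w (bpos w k + t))) k.

Definition OmegaI (L n : nat) (I : pred nat) (w : seq letter) : Prop :=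
  Omega L n w /\ (forall k, I k -> (wt L n w).2 k = 0).

(* u occurs as a factor of the cyclic word w at consecutive positions
   s, s+1, ..., s+|u|-1 (mod L), which are pairwise distinct. *)
Definition factor (w : seq letter) (s : nat) (u : seq letter) : Prop :=
  size u <= size w /\ forall t, t < size u -> at_ w (s + t) = nth (Box 0) u t.

Definition replace (w : seq letter) (s : nat) (v : seq letter) : seq letter :=
  mkseq (fun j => let o := (j + size w - s %% size w) %% size w in
                  if o < size v then nth (Box 0) v o else nth (Box 0) w j)
        (size w).

Definition T1 (n k : nat) (w w' : seq letter) : Prop :=
  exists s i, i != k /\ factor w s [:: Bul k; Box i] /\
              w' = replace w s [:: Box i; Bul k].
Definition T2 (n k : nat) (w w' : seq letter) : Prop :=
  exists s (C : seq letter), all is_box C /\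
    factor w s (Bul (prevl n k) :: C ++ [:: Bul k; Box k]) /\
    w' = replace w s (Bul (prevl n k) :: Box (prevl n k) :: C ++ [:: Bul k]).
Definition T3 (n k : nat) (w w' : seq letter) : Prop :=
  exists s i, i != k /\ factor w s [:: Box i; Bul k] /\
              w' = replace w s [:: Bul k; Box i].
Definition T4 (n k : nat) (w w' : seq letter) : Prop :=
  exists s (C : seq letter), all is_box C /\
    factor w s (Box k :: Bul k :: C ++ [:: Bul (nextl n k)]) /\
    w' = replace w s (Bul k :: C ++ [:: Box (nextl n k); Bul (nextl n k)]).

Definition stepI (n : nat) (I : pred nat) (w w' : seq letter) : Prop :=
  exists k, 1 <= k <= n /\
    (T1 n k w w' \/ T2 n k w w' \/ (~~ I k /\ (T3 n k w w' \/ T4 n k w w'))).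

From mathcomp Require Import all_boot zify.
Set Implicit Arguments. Unset Strict Implicit. Unset Printing Implicit Defensive.

Lemma modn_lt_double x L : 0 < L -> x < 2 * L -> x = x %% L \/ x = x %% L + L.
Proof.
move=> L_gt0 hx; case: (ltnP x L) => h; first by left; rewrite modn_small.
right; rewrite -{1}(subnK h) -{2}(subnK h) modnDr modn_small //; lia.
Qed.

Lemma offset_addn L b x t : b <= L ->
  ((x + t) %% L + L - b) %% L = ((x + L - b) %% L + t) %% L.
Proof.
move=> hb; rewrite -!addnBA // modnDml modnDml; congr (_ %% _); lia.
Qed.

Lemma offset_eq0 L b x : b < L -> x < L -> (x + L - b) %% L = 0 -> x = b.
Proof.
move=> hb hx E; have L_gt0 : 0 < L by lia.
have := modn_lt_double (x := x + L - b) L_gt0 ltac:(lia); rewrite E; lia.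
Qed.

Lemma at_cong w x y : x %% size w = y %% size w -> at_ w x = at_ w y.
Proof. by rewrite /at_ => ->. Qed.

Lemma at_addn_size w x : at_ w (x + size w) = at_ w x.
Proof. by apply: at_cong; rewrite modnDr. Qed.

Lemma is_bulP k x : is_bul k x -> x = Bul k.
Proof. by case: x => // k' /eqP ->. Qed.

Lemma not_boxP x : ~~ is_box x -> exists b, x = Bul b.
Proof. by case: x => // b _; exists b. Qed.

Lemma is_boxP x : is_box x -> x = Box (box_label x).
Proof. by case: x. Qed.

Lemma count_gt1 T (P : pred T) x0 s p q : p < q < size s ->
  P (nth x0 s p) -> P (nth x0 s q) -> 1 < count P s.
Proof.
elim: s p q => [|a s IH] [|p] [|q] //= hpq hp hq; try lia.
- have : has P s by apply/(has_nthP x0); exists q.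
  by rewrite hp has_count; case: (count P s).
- have := IH p q ltac:(lia) hp hq; lia.
Qed.

Lemma bposP w k : count (is_bul k) w = 1 ->
  bpos w k < size w /\ nth (Box 0) w (bpos w k) = Bul k.
Proof.
move=> hc; have hh : has (is_bul k) w by rewrite has_count hc.
by split; [rewrite /bpos -has_find | apply/is_bulP/nth_find].
Qed.

Lemma bpos_uniq w k p : count (is_bul k) w = 1 -> p < size w ->
  nth (Box 0) w p = Bul k -> p = bpos w k.
Proof.
move=> hc hp hn; have [hb hnb] := bposP hc.
case: (ltngtP p (bpos w k)) => // E.
- by have := before_find (Box 0) E; rewrite hn /= eqxx.
- have := count_gt1 (P := is_bul k) (x0 := Box 0) (s := w) (p := bpos w k) (q := p).
  by rewrite hnb hn /= eqxx hc => /(_ ltac:(lia) isT isT).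
Qed.

Definition Omega_unordered L n w :=
  [/\ size w = L, all (fun x => 1 <= letter_label x <= n) w &
      (forall k, 1 <= k <= n -> count (is_bul k) w = 1)].

Lemma Omega_unordered_of L n w : Omega L n w -> Omega_unordered L n w.
Proof. by case. Qed.

Section Bullets.
Variables (L n : nat) (w : seq letter).
Hypothesis hw : Omega_unordered L n w.

Lemma at_label : 0 < L -> forall x, 1 <= letter_label (at_ w x) <= n.
Proof.
case: hw => hs ha _ L_gt0 x; move/(all_nthP (Box 0)): ha; apply.
by rewrite ltn_pmod // hs.
Qed.

Lemma bpos_lt k : 1 <= k <= n -> bpos w k < L.
Proof. by case: hw => <- _ hc /hc/bposP[]. Qed.

Lemma at_bpos k : 1 <= k <= n -> at_ w (bpos w k) = Bul k.
Proof. by case: hw => hs _ hc /hc/bposP[hb hn]; rewrite /at_ modn_small. Qed.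

Lemma at_bulP x k : 0 < L -> at_ w x = Bul k -> 1 <= k <= n /\ x %% L = bpos w k.
Proof.
move=> L_gt0 hx; have := at_label L_gt0 x; rewrite hx /= => hk; split => //.
case: hw => hs _ hc; apply: bpos_uniq; first exact: hc.
- by rewrite -hs ltn_pmod // hs.
- by rewrite -hx /at_ hs.
Qed.

End Bullets.

Lemma cdist_spec L a b : 0 < L -> a < L -> b < L ->
  0 < cdist L a b <= L /\ (a + cdist L a b) %% L = b.
Proof.
move=> L_gt0 ha hb; rewrite /cdist.
have := modn_lt_double (x := b + L - a) L_gt0 ltac:(lia).
have := ltn_pmod (b + L - a) L_gt0.
case: eqP => [-> _ h|].
  split; first lia.
  by rewrite (_ : a + L = b + L) ?modnDr ?modn_small //; lia.
move: ((b + L - a) %% L) => r r0 rL Er; split; first lia.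
have := modn_lt_double (x := a + r) L_gt0 ltac:(lia).
have := ltn_pmod (a + r) L_gt0.
move: ((a + r) %% L) => z; lia.
Qed.

Lemma cdist_uniq L a b c : 0 < L -> a < L -> b < L -> 0 < c <= L ->
  (a + c) %% L = b -> c = cdist L a b.
Proof.
move=> L_gt0 ha hb hc E; rewrite /cdist.
have := modn_lt_double (x := b + L - a) L_gt0 ltac:(lia).
have := ltn_pmod (b + L - a) L_gt0.
have := modn_lt_double (x := a + c) L_gt0 ltac:(lia).
rewrite E; case: eqP => [->|]; first lia.
move: ((b + L - a) %% L) => r; lia.
Qed.

Lemma nextl_range n k : 1 <= k <= n -> 1 <= nextl n k <= n.
Proof. rewrite /nextl; case: eqP; lia. Qed.

Lemma nextl_lt n k : k < n -> nextl n k = k.+1.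
Proof. rewrite /nextl; case: eqP; lia. Qed.

Lemma nextl_n n : nextl n n = 1.
Proof. by rewrite /nextl eqxx. Qed.

Lemma nextl_prevl n k : 1 <= k <= n -> nextl n (prevl n k) = k.
Proof. rewrite /nextl /prevl; case: (k =P 1) => [->|h]; rewrite ?eqxx //; case: eqP; lia. Qed.

Lemma prevl_range n k : 1 <= k <= n -> 1 <= prevl n k <= n.
Proof. rewrite /prevl; case: eqP; lia. Qed.

Lemma nextl_fixed n k : 1 <= k <= n -> nextl n k = k -> n = 1.
Proof. rewrite /nextl; case: eqP; lia. Qed.

Lemma offset_no_wrap x c L : x < L -> 0 < c <= L ->
  x < (x + c) %% L \/ (x + c) %% L = 0 -> x + c <= L.
Proof.
move=> hx hc; have L_gt0 : 0 < L by lia.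
have := modn_lt_double (x := x + c) L_gt0 ltac:(lia); lia.
Qed.

Definition cyclic_order L n w := forall k1 k2, 1 <= k1 -> k1 < k2 -> k2 <= n ->
  (bpos w k1 + L - bpos w 1) %% L < (bpos w k2 + L - bpos w 1) %% L.

Definition gaps_boxed L n w := forall k t, 1 <= k <= n ->
  0 < t < cdist L (bpos w k) (bpos w (nextl n k)) -> is_box (at_ w (bpos w k + t)).

Section CyclicOrder.
Variables (L n : nat) (w : seq letter).
Hypotheses (L_gt0 : 0 < L) (hw : Omega_unordered L n w).

Let D x := (x + L - bpos w 1) %% L.

Let size_w : size w = L.
Proof. by case: hw. Qed.

Let D_addn x t : D ((x + t) %% L) = (D x + t) %% L.
Proof. by rewrite /D offset_addn // -size_w find_size. Qed.

Lemma cyclic_order_gaps_boxed : cyclic_order L n w -> gaps_boxed L n w.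
Proof.
move=> hord k t hk ht; apply/negPn/negP => /not_boxP[j hj].
have [hj_range hj_pos] := at_bulP hw L_gt0 hj.
have hk' := nextl_range hk.
have [hc hc_pos] := cdist_spec L_gt0 (bpos_lt hw hk) (bpos_lt hw hk').
move: ht hc hc_pos; set c := cdist _ _ _ => ht hc hc_pos.
have Dk_lt : D (bpos w k) < L by exact: ltn_pmod.
have Dnext : D (bpos w (nextl n k)) = (D (bpos w k) + c) %% L by rewrite -hc_pos D_addn.
have no_wrap : D (bpos w k) + c <= L.
  apply: offset_no_wrap => //; rewrite -Dnext.
  case: (ltnP k n) => hkn; [left | right].
  - by rewrite nextl_lt //; apply: hord; lia.
  - by rewrite (_ : k = n) ?nextl_n /D ?addKn ?modnn //; lia.
have Dj : D (bpos w j) = D (bpos w k) + t by rewrite -hj_pos D_addn modn_small //; lia.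
case: (ltnP k n) => hkn.
- have hD : D (bpos w k) < D (bpos w k.+1) := hord k k.+1 ltac:(lia) ltac:(lia) hkn.
  rewrite -(nextl_lt hkn) Dnext in hD.
  have strict_no_wrap : D (bpos w k) + c < L.
    by case: (ltngtP (D (bpos w k) + c) L) hD => [//||->]; [lia | rewrite modnn].
  have Dk1 : D (bpos w k.+1) = D (bpos w k) + c.
    by rewrite -(nextl_lt hkn) Dnext modn_small.
  case: (ltngtP j k) => [jk|kj|jk]; last by move: Dj; rewrite jk; lia.
  + by have : D (bpos w j) < D (bpos w k) := hord j k ltac:(lia) jk ltac:(lia); lia.
  + case: (ltngtP j k.+1) => [|k1j|jk1]; [lia| |by subst j; lia].
    by have : D (bpos w k.+1) < D (bpos w j) := hord k.+1 j ltac:(lia) k1j ltac:(lia); lia.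
- have kn : k = n by lia.
  subst k.
  case: (ltngtP j n) => [jn||jn]; [|lia|by subst j; lia].
  by have : D (bpos w j) < D (bpos w n) := hord j n ltac:(lia) jn (leqnn n); lia.
Qed.

Lemma gaps_boxed_cyclic_order : 1 <= n -> gaps_boxed L n w -> cyclic_order L n w.
Proof.
move=> n_gt0 hgap.
have h1 : 1 <= 1 <= n by lia.
have adjacent j : 1 <= j < n -> D (bpos w j) < D (bpos w j.+1).
  move=> hj; rewrite ltnNge; apply/negP => hle.
  have hj' : 1 <= j <= n by lia.
  have hj1 : 1 <= j.+1 <= n by lia.
  have [hc hc_pos] := cdist_spec L_gt0 (bpos_lt hw hj') (bpos_lt hw hj1).
  move: hc hc_pos (hgap j) hle; rewrite nextl_lt; last lia.
  set c := cdist _ _ _; set x := D (bpos w j) => hc hc_pos hgap_j hle.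
  have x_lt : x < L by exact: ltn_pmod.
  rewrite -hc_pos D_addn -/x in hle.
  have wrap : 0 < L - x <= c.
    by have := modn_lt_double (x := x + c) L_gt0 ltac:(lia); lia.
  have at1 : (bpos w j + (L - x)) %% L = bpos w 1.
    apply: (offset_eq0 (bpos_lt hw h1) (ltn_pmod _ L_gt0)).
    by rewrite -/(D _) D_addn -/x subnKC ?modnn //; lia.
  case: (ltngtP (L - x) c) => [lt_c||eq_c]; [|lia|].
  - have := hgap_j (L - x) hj' ltac:(lia).
    rewrite (@at_cong _ _ (bpos w 1)) ?(at_bpos hw h1) //.
    by rewrite size_w at1 modn_small // (bpos_lt hw h1).
  - have := at_bpos hw hj1; rewrite -hc_pos -eq_c at1 (at_bpos hw h1).
    by case; lia.
move=> k1 k2 hk1; elim: k2 => // k2 IH hk12 hk2.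
case: (ltngtP k1 k2) => [lt12||<-]; [|lia|by apply: adjacent; lia].
by have := IH lt12 ltac:(lia); have := adjacent k2 ltac:(lia); rewrite /D; lia.
Qed.

End CyclicOrder.

Lemma Omega_gaps_boxedE L n w : 1 <= n <= L ->
  Omega L n w <-> Omega_unordered L n w /\ gaps_boxed L n w.
Proof.
move=> hn; have L_gt0 : 0 < L by lia.
split=> [[hs ha hc hord] | [[hs ha hc] hgap]].
- have hw : Omega_unordered L n w by [].
  by split => //; apply: cyclic_order_gaps_boxed.
- by split => //; apply: (gaps_boxed_cyclic_order L_gt0) => //; lia.
Qed.

Lemma wt_q_eq0 L n w m : (wt L n w).2 m = 0 <->
  (forall k t, 1 <= k <= n -> 0 < t < cdist L (bpos w k) (bpos w (nextl n k)) ->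
     (wbox n (box_label (at_ w (bpos w k + t))) k).2 m = 0).
Proof.
have snd_mmul : {morph (fun x : monomial => x.2 m) : x y / mmul x y >-> x + y} by [].
rewrite /wt (big_morph _ snd_mmul (id1 := 0) (erefl : mone.2 m = 0)).
under eq_bigr do rewrite (big_morph _ snd_mmul (id1 := 0) (erefl : mone.2 m = 0)).
split=> [/eqP | hq].
- rewrite sum_nat_seq_eq0 => /allP hq k t hk ht.
  move: (hq k); rewrite mem_index_iota => /(_ ltac:(lia)) /=.
  by rewrite sum_nat_seq_eq0 => /allP /(_ t); rewrite mem_index_iota => /(_ ht) /eqP.
- apply/eqP; rewrite sum_nat_seq_eq0; apply/allP => k; rewrite mem_index_iota => hk /=.
  rewrite sum_nat_seq_eq0; apply/allP => t; rewrite mem_index_iota => ht /=.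
  by apply/eqP/hq => //; lia.
Qed.

Definition admissible n (I : pred nat) a (x : letter) : Prop :=
  match x with
  | Bul b => b = nextl n a
  | Box i => forall m, I m -> (wbox n i a).2 m = 0
  end.

(* Reading a cyclic word [g] from a bullet [a], every letter up to and including
   the next bullet is admissible after [a]: this is the local form of
   membership in Omega^I (see [OmegaI_local_rule]). *)
Definition local_rule n I L (g : nat -> letter) := forall y a t,
  y < L -> 0 < t <= L -> g y = Bul a ->
  (forall t', 0 < t' < t -> is_box (g (y + t'))) -> admissible n I a (g (y + t)).

Section LocalRule.
Variables (L n : nat) (I : pred nat) (w : seq letter).
Hypotheses (L_gt0 : 0 < L) (hw : Omega_unordered L n w).

Let size_w : size w = L.
Proof. by case: hw. Qed.

Lemma local_rule_gaps_boxed : local_rule n I L (at_ w) -> gaps_boxed L n w.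
Proof.
move=> hrule k t hk.
have hk' := nextl_range hk.
pose nonbox t := (0 < t) && ~~ is_box (at_ w (bpos w k + t)).
have nonbox_L : nonbox L by rewrite /nonbox -{2}size_w at_addn_size (at_bpos hw hk) L_gt0.
case: (ex_minnP (ex_intro nonbox L nonbox_L)) => c /andP[c_gt0 /not_boxP[b hb]] c_min.
have cL : c <= L by exact: c_min.
have boxes t' : 0 < t' < c -> is_box (at_ w (bpos w k + t')).
  move=> ht'; apply/negPn/negP => hnb.
  by have := c_min t'; rewrite /nonbox hnb andbT => /(_ ltac:(lia)); lia.
have := hrule (bpos w k) k c (bpos_lt hw hk) ltac:(lia) (at_bpos hw hk) boxes.
rewrite hb /= => hb_next.
have [_ hb_pos] := at_bulP hw L_gt0 hb.
suff -> : cdist L (bpos w k) (bpos w (nextl n k)) = c by apply: boxes.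
apply/esym/cdist_uniq; rewrite ?hb_pos ?hb_next ?(bpos_lt hw) //; lia.
Qed.

Lemma gaps_boxed_local_rule : gaps_boxed L n w ->
  (forall m, I m -> (wt L n w).2 m = 0) -> local_rule n I L (at_ w).
Proof.
move=> hgap hwt y a t hy ht hya boxes.
have [ha hy_pos] := at_bulP hw L_gt0 hya.
have ha' := nextl_range ha.
have [hc hc_pos] := cdist_spec L_gt0 (bpos_lt hw ha) (bpos_lt hw ha').
have shift t' : at_ w (y + t') = at_ w (bpos w a + t').
  by apply: at_cong; rewrite size_w -modnDml hy_pos.
have at_next : at_ w (bpos w a + cdist L (bpos w a) (bpos w (nextl n a))) = Bul (nextl n a).
  rewrite -(at_bpos hw ha'); apply: at_cong.
  by rewrite size_w hc_pos modn_small // (bpos_lt hw ha').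
rewrite shift; case: (ltngtP t (cdist L (bpos w a) (bpos w (nextl n a)))) => [lt_c|gt_c|->].
- rewrite (is_boxP (hgap a t ha _)) /=; last lia.
  by move=> m /hwt /wt_q_eq0; apply; lia.
- by have := boxes (cdist L (bpos w a) (bpos w (nextl n a))) ltac:(lia); rewrite shift at_next.
- by rewrite at_next.
Qed.

End LocalRule.

Lemma OmegaI_local_rule L n I w : 1 <= n <= L ->
  OmegaI L n I w <-> Omega_unordered L n w /\ local_rule n I L (at_ w).
Proof.
move=> hn; have L_gt0 : 0 < L by lia.
split=> [[/(Omega_gaps_boxedE _ hn)[hw hgap] hwt] | [hw hrule]].
  by split => //; apply: gaps_boxed_local_rule.
have hgap := local_rule_gaps_boxed L_gt0 hw hrule.
split; first exact/(Omega_gaps_boxedE _ hn).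
move=> m Im; apply/wt_q_eq0 => k t hk ht.
have [hc _] := cdist_spec L_gt0 (bpos_lt hw hk) (bpos_lt hw (nextl_range hk)).
have boxes t' : 0 < t' < t -> is_box (at_ w (bpos w k + t')).
  by move=> ht'; apply: hgap => //; lia.
have := hrule (bpos w k) k t (bpos_lt hw hk) ltac:(lia) (at_bpos hw hk) boxes.
by rewrite (is_boxP (hgap k t hk ht)); apply.
Qed.

Definition periodic L (g : nat -> letter) := forall j, g (j + L) = g j.

Section Periodic.
Variables (n L : nat) (I : pred nat) (g : nat -> letter).
Hypotheses (L_gt0 : 0 < L) (g_per : periodic L g).

Lemma periodic_mod x : g x = g (x %% L).
Proof.
rewrite {1}(divn_eq x L) addnC; elim: (x %/ L) => [|q IH]; first by rewrite mul0n addn0.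
by rewrite mulSn addnCA addnC g_per.
Qed.

Lemma local_rule_anywhere : local_rule n I L g -> forall y a t, 0 < t <= L ->
  g y = Bul a -> (forall t', 0 < t' < t -> is_box (g (y + t'))) ->
  admissible n I a (g (y + t)).
Proof.
move=> hrule y a t ht hya boxes.
have shift j : g (y + j) = g (y %% L + j).
  by rewrite periodic_mod [RHS]periodic_mod modnDml.
rewrite shift; apply: hrule; rewrite -?periodic_mod ?ltn_pmod //.
by move=> t' ht'; rewrite -shift; apply: boxes.
Qed.

Lemma local_rule_shift s : local_rule n I L g -> local_rule n I L (fun j => g (s + j)).
Proof.
move=> hrule y a t _ ht hya boxes /=; rewrite addnA.
by apply: local_rule_anywhere => // t' ht'; rewrite -addnA; apply: boxes.
Qed.

End Periodic.

Lemma eq_local_rule n I L (g1 g2 : nat -> letter) :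
  g1 =1 g2 -> local_rule n I L g1 -> local_rule n I L g2.
Proof.
move=> e hrule y a t hy ht hya boxes; rewrite -e.
by apply: hrule; rewrite ?e // => t' ht'; rewrite e; apply: boxes.
Qed.

Lemma count_rot T (a : pred T) k (s : seq T) : count a (rot k s) = count a s.
Proof. by rewrite /rot count_cat addnC -count_cat cat_take_drop. Qed.

Lemma all_rot T (a : pred T) k (s : seq T) : all a (rot k s) = all a s.
Proof. by rewrite /rot all_cat andbC -all_cat cat_take_drop. Qed.

Lemma size_replace w s v : size (replace w s v) = size w.
Proof. by rewrite size_mkseq. Qed.

Lemma at_replace w s v j : size v <= size w -> j < size w ->
  at_ (replace w s v) (s %% size w + j) =
  if j < size v then nth (Box 0) v j else at_ w (s %% size w + j).
Proof.
move=> hv hj; have L_gt0 : 0 < size w by lia.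
rewrite /at_ size_replace /replace nth_mkseq ?ltn_pmod //=.
have hs := ltn_pmod s L_gt0.
suff -> : ((s %% size w + j) %% size w + size w - s %% size w) %% size w = j by [].
have := modn_lt_double (x := s %% size w + j) L_gt0 ltac:(lia).
have := ltn_pmod (s %% size w + j) L_gt0.
move: ((s %% size w + j) %% size w) => z h1 [] h2.
- rewrite (_ : z + size w - s %% size w = j + size w); last lia.
  by rewrite modnDr modn_small.
- rewrite (_ : z + size w - s %% size w = j); last lia.
  by rewrite modn_small.
Qed.

Lemma at_factor w s u j : factor w s u -> j < size u ->
  at_ w (s %% size w + j) = nth (Box 0) u j.
Proof. by case=> _ hf hj; rewrite -hf //; apply: at_cong; rewrite modnDml. Qed.

Lemma nth_rot_at w k j : k < size w -> j < size w ->
  nth (Box 0) (rot k w) j = at_ w (k + j).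
Proof.
move=> hk hj; have L_gt0 : 0 < size w by lia.
rewrite /rot /at_ nth_cat size_drop; case: ltnP => h.
  by rewrite nth_drop modn_small //; lia.
rewrite nth_take; last lia.
have := modn_lt_double (x := k + j) L_gt0 ltac:(lia).
have := ltn_pmod (k + j) L_gt0.
by move: ((k + j) %% size w) => z h1 h2; congr nth; lia.
Qed.

Lemma rot_factor w s u : 0 < size w -> factor w s u ->
  rot (s %% size w) w = u ++ drop (size u) (rot (s %% size w) w).
Proof.
move=> L_gt0 hf; have hu : size u <= size w by case: hf.
suff E : take (size u) (rot (s %% size w) w) = u by rewrite -{1}E cat_take_drop.
apply: (@eq_from_nth _ (Box 0)); first by rewrite size_takel // size_rot.
move=> i; rewrite size_takel ?size_rot // => hi.
by rewrite nth_take // nth_rot_at ?ltn_pmod ?(at_factor hf) //; lia.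
Qed.

Lemma rot_replace w s (u v : seq letter) : 0 < size w -> size u <= size w ->
  size v = size u ->
  rot (s %% size w) (replace w s v) = v ++ drop (size u) (rot (s %% size w) w).
Proof.
move=> L_gt0 hu hv; apply: (@eq_from_nth _ (Box 0)).
  by rewrite size_rot size_replace size_cat size_drop size_rot; lia.
move=> i; rewrite size_rot size_replace => hi.
rewrite nth_rot_at ?size_replace ?ltn_pmod // at_replace; try lia.
rewrite nth_cat hv; case: ifP => // h.
by rewrite nth_drop nth_rot_at ?ltn_pmod //; [congr at_; congr addn|]; lia.
Qed.

Lemma Omega_unordered_replace L n w s u v :
  Omega_unordered L n w -> factor w s u -> size v = size u ->
  (forall j, count (is_bul j) v = count (is_bul j) u) ->
  all (fun x => 1 <= letter_label x <= n) v -> Omega_unordered L n (replace w s v).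
Proof.
move=> [hs ha hc] hf hv hcount hall.
have hu : size u <= size w by case: hf.
have [/size0nil w_nil | L_gt0] := posnP (size w).
  by move: hs ha hc; rewrite /replace w_nil.
set r := drop (size u) (rot (s %% size w) w).
have rot_w : rot (s %% size w) w = u ++ r := rot_factor L_gt0 hf.
have rot_w' : rot (s %% size w) (replace w s v) = v ++ r := rot_replace s L_gt0 hu hv.
split; first by rewrite size_replace.
- rewrite -(all_rot _ (s %% size w)) rot_w' all_cat hall.
  by move: ha; rewrite -(all_rot _ (s %% size w)) rot_w all_cat => /andP[].
- move=> k hk; rewrite -(count_rot _ (s %% size w)) rot_w' count_cat hcount.
  by rewrite -count_cat -rot_w count_rot hc.
Qed.

Lemma OmegaI_replace L n I w s u v : 1 <= n <= L -> OmegaI L n I w -> factor w s u ->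
  size v = size u -> (forall j, count (is_bul j) v = count (is_bul j) u) ->
  all (fun x => 1 <= letter_label x <= n) v ->
  (local_rule n I L (fun j => at_ w (s %% L + j)) ->
   local_rule n I L (fun j => at_ (replace w s v) (s %% L + j))) ->
  OmegaI L n I (replace w s v).
Proof.
move=> hn /(OmegaI_local_rule _ _ hn)[hw hrule] hf hv hcount hall htrans.
have L_gt0 : 0 < L by lia.
have [size_w _ _] := hw.
have size_w' : size (replace w s v) = L by rewrite size_replace.
have per w0 : size w0 = L -> periodic L (at_ w0) by move=> <-; exact: at_addn_size.
apply/(OmegaI_local_rule _ _ hn); split; first exact: Omega_unordered_replace hf hv hcount hall.
have per_shift : periodic L (fun j => at_ (replace w s v) (s %% L + j)).
  by move=> j /=; rewrite addnA per.
have := local_rule_shift L_gt0 per_shift (s := L - s %% L)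
  (htrans (local_rule_shift L_gt0 (per _ size_w) (s := s %% L) hrule)).
apply: eq_local_rule => j /=.
by rewrite addnA subnKC ?(ltnW (ltn_pmod _ _)) // addnC per.
Qed.

(* The q-part of w_Box(i,k) is the product of the q_m over the cyclic interval (i,k]. *)
Lemma wbox_q_self n i m : (wbox n i i).2 m = 0.
Proof. rewrite /= leqnn; lia. Qed.

Lemma wbox_q_le_next n i a m : 1 <= i <= n -> a <= n -> i != nextl n a ->
  (wbox n i a).2 m <= (wbox n i (nextl n a)).2 m.
Proof. rewrite /nextl /=; case: (a =P n) => Ea; case: ifP; case: ifP; lia. Qed.

Lemma wbox_q_next_le n i a m : i <= n -> a <= n -> m != nextl n a ->
  (wbox n i (nextl n a)).2 m <= (wbox n i a).2 m.
Proof. rewrite /nextl /=; case: (a =P n) => Ea; case: ifP; case: ifP; lia. Qed.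

Lemma wbox_q_nextl n a m : a <= n -> nextl n a != a -> 1 <= m <= n -> m != nextl n a ->
  (wbox n (nextl n a) a).2 m = 1.
Proof. rewrite /nextl /=; case: (a =P n) => Ea; case: ifP; lia. Qed.

Lemma boxes_at (g : nat -> letter) y t t' j :
  (forall t', 0 < t' < t -> is_box (g (y + t'))) -> 0 < t' < t -> y + t' = j -> is_box (g j).
Proof. by move=> boxes ht' <-; apply: boxes. Qed.

Section Transitions.
Variables (n L : nat) (I : pred nat) (g g' : nat -> letter).
Hypotheses (g_per : periodic L g) (g'_per : periodic L g').
Hypotheses (g_label : forall j, 1 <= letter_label (g j) <= n) (hrule : local_rule n I L g).

Lemma local_rule_T1 k i : 2 <= L ->
  g 0 = Bul k -> g 1 = Box i -> g' 0 = Box i -> g' 1 = Bul k ->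
  (forall j, 2 <= j < L -> g' j = g j) -> i != k -> local_rule n I L g'.
Proof.
move=> L2 g0 g1 g'0 g'1 same_after ik Y a t hy ht hgy boxes.
have Hi : 1 <= i <= n by have := g_label 1; rewrite g1.
have gL : g L = Bul k by rewrite -[L]add0n g_per.
have gL1 : g (L + 1) = Box i by rewrite addnC g_per.
have g'L : g' L = Box i by rewrite -[L]add0n g'_per.
have g'L1 : g' (L + 1) = Bul k by rewrite addnC g'_per.
have Qk : admissible n I k (Box i) by rewrite -g1; apply: (hrule (y := 0)) => //; [lia|lia|move=> t'; lia].
case: Y hy hgy boxes => [|[|Y]] hy hgy boxes.
- by rewrite g'0 in hgy.
- rewrite g'1 in hgy; case: hgy => <-.
  case: (ltngtP (1 + t) L) => Ht1.
  + have -> : g' (1 + t) = g (0 + t.+1) by rewrite same_after //; lia.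
    apply: hrule => //; [lia|lia|] => t' Ht'.
    case: t' Ht' => [|[|t']] Ht' //; first by rewrite g1.
    rewrite -same_after; last lia. by apply: (boxes_at boxes (t' := t'.+1)); lia.
  + rewrite (_ : 1 + t = L + 1); last lia. rewrite g'L1.
    have := @hrule 0 k L ltac:(lia) ltac:(lia) g0; rewrite add0n gL; apply.
    move=> t' Ht'; case: t' Ht' => [|[|t']] Ht' //; first by rewrite g1.
    rewrite -same_after; last lia. by apply: (boxes_at boxes (t' := t'.+1)); lia.
  + by rewrite Ht1 g'L.
- have HgY' : g Y.+2 = Bul a by rewrite -same_after // ?hgy //; lia.
  case: (ltngtP (Y.+2 + t) L) => Ht1.
  + rewrite same_after; last lia. apply: hrule; [lia|lia|exact HgY'|] => t' Ht'.
    rewrite -same_after; last lia. by apply: (boxes_at boxes (t' := t')); lia.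
  + case: (ltngtP (Y.+2 + t) (L + 1)) => Ht2.
    * lia.
    * have := boxes_at boxes (t' := L + 1 - Y.+2) (j := L + 1); rewrite g'L1 => /(_ _ _)/=.
      by move=> /(_ ltac:(lia) ltac:(lia)).
    * rewrite Ht2 g'L1.
      have := @hrule Y.+2 a t.-1 hy ltac:(lia) HgY'.
      rewrite (_ : Y.+2 + t.-1 = L); last lia. rewrite gL; apply.
      move=> t' Ht'; rewrite -same_after; last lia. by apply: (boxes_at boxes (t' := t')); lia.
  + have Hn : k = nextl n a.
      have := @hrule Y.+2 a t hy ht HgY'. rewrite Ht1 gL; apply.
      move=> t' Ht'; rewrite -same_after; last lia. by apply: (boxes_at boxes (t' := t')); lia.
    rewrite Ht1 g'L => m Im.
    have Ha : a <= n by have := g_label Y.+2; rewrite HgY' => /andP[].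
    by have := wbox_q_le_next m Hi Ha; rewrite -Hn Qk // => /(_ ik); lia.
Qed.

Lemma local_rule_pred_bullet k i : 2 <= L -> g 0 = Box i -> g 1 = Bul k ->
  exists a0, [/\ 1 <= a0 <= n, k = nextl n a0 & admissible n I a0 (Box i)].
Proof.
move=> L2 g0 g1.
have gL : g L = Box i by rewrite -[L]add0n g_per.
have gL1 : g (L + 1) = Bul k by rewrite addnC g_per.
pose P := fun j => (j < L) && ~~ is_box (g j).
have exP : exists j, P j by exists 1; rewrite /P g1 /= andbT.
have ubP : forall j, P j -> j <= L by move=> j /andP[/ltnW].
case: (ex_maxnP exP ubP) => Y0 /andP[HY0 HbY0] Hmax.
have Y01 : 1 <= Y0 by apply: (Hmax 1); rewrite /P g1 /= andbT.
case: (not_boxP HbY0) => a0 Ha0.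
have Hbox : forall j, Y0 < j < L -> is_box (g j).
  move=> j Hj; apply/negPn/negP => Hb.
  have := Hmax j; rewrite /P Hb andbT; lia.
exists a0; split.
- by have := g_label Y0; rewrite Ha0.
- have := @hrule Y0 a0 (L + 1 - Y0) HY0 ltac:(lia) Ha0.
  rewrite (_ : Y0 + (L + 1 - Y0) = L + 1); last lia. rewrite gL1; apply.
  move=> t' Ht'; case: (ltngtP (Y0 + t') L) => E.
  + apply: Hbox; lia.
  + lia.
  + by rewrite E gL.
- have := @hrule Y0 a0 (L - Y0) HY0 ltac:(lia) Ha0.
  rewrite (_ : Y0 + (L - Y0) = L); last lia. rewrite gL; apply.
  move=> t' Ht'; apply: Hbox; lia.
Qed.

Lemma local_rule_own_box k : 2 <= L -> g 0 = Box k -> g 1 = Bul k ->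
  forall m, I m -> 1 <= m <= n -> m = k.
Proof.
move=> L2 g0 g1 m Im hm; apply/eqP/negPn/negP => mk.
have [a [ha ka adm_a]] := local_rule_pred_bullet L2 g0 g1.
have hk : 1 <= k <= n by have := g_label 1; rewrite g1.
case: (eqVneq (nextl n a) a) => [fixed | moved].
  by have := nextl_fixed ha fixed; lia.
by have := adm_a m Im; rewrite ka wbox_q_nextl //; lia.
Qed.

Lemma local_rule_T3 k i : 2 <= L ->
  g 0 = Box i -> g 1 = Bul k -> g' 0 = Bul k -> g' 1 = Box i ->
  (forall j, 2 <= j < L -> g' j = g j) -> i != k -> ~~ I k -> local_rule n I L g'.
Proof.
move=> L2 g0 g1 g'0 g'1 same_after ik Ik Y a t hy ht hgy boxes.
have Hi : 1 <= i <= n by have := g_label 0; rewrite g0.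
have gL : g L = Box i by rewrite -[L]add0n g_per.
have gL1 : g (L + 1) = Bul k by rewrite addnC g_per.
have g'L : g' L = Bul k by rewrite -[L]add0n g'_per.
have g'L1 : g' (L + 1) = Box i by rewrite addnC g'_per.
case: Y hy hgy boxes => [|[|Y]] hy hgy boxes.
- rewrite g'0 in hgy; case: hgy => <-.
  case: t ht boxes => [|[|t]] ht boxes; first lia.
  + rewrite addn1 g'1.
    have [a0 [Ha0 Hk Hok]] := local_rule_pred_bullet L2 g0 g1.
    move=> m Im; subst k.
    have Hm : m != nextl n a0 by apply: contraNneq Ik => <-.
    have := wbox_q_next_le (n := n) (i := i) (a := a0) ltac:(lia) ltac:(lia) Hm; rewrite (Hok m Im); lia.
  + case: (ltngtP (t.+2) L) => E.
    * rewrite add0n same_after; last lia.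
      have := @hrule 1 k t.+1 ltac:(lia) ltac:(lia) g1. rewrite add1n; apply.
      move=> t' Ht'; rewrite -same_after; last lia. by apply: (boxes_at boxes (t' := t'.+1)); lia.
    * lia.
    * rewrite add0n E g'L /=.
      have := @hrule 1 k L ltac:(lia) ltac:(lia) g1. rewrite addnC gL1; apply.
      move=> t' Ht'; case: (ltngtP (1 + t') L) => E2.
      -- rewrite -same_after; last lia. by apply: (boxes_at boxes (t' := 1 + t')); lia.
      -- lia.
      -- by rewrite E2 gL.
- by rewrite g'1 in hgy.
- have HgY' : g Y.+2 = Bul a by rewrite -same_after // ?hgy //; lia.
  case: (ltngtP (Y.+2 + t) L) => Ht1.
  + rewrite same_after; last lia. apply: hrule; [lia|lia|exact HgY'|] => t' Ht'.
    rewrite -same_after; last lia. by apply: (boxes_at boxes (t' := t')); lia.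
  + have := boxes_at boxes (t' := L - Y.+2) (j := L); rewrite g'L => /(_ _ _)/=.
    by move=> /(_ ltac:(lia) ltac:(lia)).
  + rewrite Ht1 g'L.
    have := @hrule Y.+2 a t.+1 hy ltac:(lia) HgY'.
    rewrite (_ : Y.+2 + t.+1 = L + 1); last lia. rewrite gL1; apply.
    move=> t' Ht'; case: (ltngtP (Y.+2 + t') L) => E2.
    -- rewrite -same_after; last lia. by apply: (boxes_at boxes (t' := t')); lia.
    -- lia.
    -- by rewrite E2 gL.
Qed.

Lemma local_rule_T2 c p k : c + 3 <= L ->
  g 0 = Bul p -> g' 0 = Bul p -> g (c + 1) = Bul k -> g (c + 2) = Box k ->
  g' 1 = Box p -> g' (c + 2) = Bul k ->
  (forall j, 1 <= j <= c -> g' j.+1 = g j) -> (forall j, 1 <= j <= c -> is_box (g j)) ->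
  (forall j, c + 3 <= j < L -> g' j = g j) -> k = nextl n p -> local_rule n I L g'.
Proof.
move=> HL g0 g'0 gc1 gc2 g'1 g'c2 Csh Cbox same_after Hk Y a t hy ht hgy boxes.
have gL : g L = Bul p by rewrite -[L]add0n g_per.
have g'L : g' L = Bul p by rewrite -[L]add0n g'_per.
have Geq' : forall j, c + 3 <= j <= L -> g' j = g j.
  move=> j Hj; case: (ltngtP j L) => E; [apply: same_after; lia|lia|by rewrite E gL g'L].
have Hout : forall Y0, c + 2 <= Y0 < L -> forall t0, 0 < t0 -> Y0 + t0 <= L ->
   (forall t', 0 < t' < t0 -> is_box (g' (Y0 + t'))) -> Y0 + t0 <= L.
  done.
case: (ltngtP Y (c + 2)) => EY.
- case: Y EY hy hgy boxes => [|Y] EY hy hgy boxes.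
  + rewrite g'0 in hgy; case: hgy => <-.
    case: (ltngtP t (c + 2)) => Et.
    * case: t Et ht boxes => [|[|t]] Et ht boxes; first lia.
      -- by rewrite g'1 /= => m _; apply: wbox_q_self.
      -- rewrite add0n Csh; last lia.
         have := @hrule 0 p t.+1 ltac:(lia) ltac:(lia) g0; rewrite add0n; apply.
         move=> t' Ht'; rewrite add0n; apply: Cbox; lia.
    * have := boxes_at boxes (t' := c + 2) (j := c + 2); rewrite g'c2.
      by move=> /(_ ltac:(lia) ltac:(lia)).
    * by rewrite Et add0n g'c2.
  + exfalso; case: Y EY hy hgy boxes => [|Y] EY hy hgy boxes; first by rewrite g'1 in hgy.
    have := Cbox Y.+1 ltac:(lia); rewrite -Csh; last lia. by rewrite hgy.
- have HgY' : g Y = Bul a by rewrite -same_after // ?hgy //; lia.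
  case: (leqP (Y + t) L) => Et.
  + rewrite Geq'; last lia. apply: hrule; [lia|lia|exact HgY'|] => t' Ht'.
    rewrite -same_after; last lia. by apply: (boxes_at boxes (t' := t')); lia.
  + have := boxes_at boxes (t' := L - Y) (j := L); rewrite g'L.
    by move=> /(_ ltac:(lia) ltac:(lia)).
- subst Y; rewrite g'c2 in hgy; case: hgy => <-.
  case: (leqP (c + 2 + t) L) => Et.
  + rewrite Geq'; last lia.
    have := @hrule (c + 1) k t.+1 ltac:(lia) ltac:(lia) gc1.
    rewrite (_ : c + 1 + t.+1 = c + 2 + t); last lia. apply.
    move=> t' Ht'; case: t' Ht' => [|[|t']] Ht'; first lia.
    * by rewrite (_ : c + 1 + 1 = c + 2) ?gc2 //; lia.
    * rewrite -same_after; last lia. by apply: (boxes_at boxes (t' := t'.+1)); lia.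
  + have := boxes_at boxes (t' := L - (c + 2)) (j := L); rewrite g'L.
    by move=> /(_ ltac:(lia) ltac:(lia)).
Qed.

Lemma local_rule_T4 c k q : c + 3 <= L -> (forall m, ~ I m) ->
  g 0 = Box k -> g 1 = Bul k -> g (c + 2) = Bul q -> g' 0 = Bul k -> g' (c + 2) = Bul q ->
  (forall j, 1 <= j <= c + 1 -> is_box (g' j)) ->
  (forall j, c + 3 <= j < L -> g' j = g j) -> q = nextl n k -> local_rule n I L g'.
Proof.
move=> HL noI g0 g1 gc2 g'0 g'c2 Cbox same_after Hq Y a t hy ht hgy boxes.
have gL : g L = Box k by rewrite -[L]add0n g_per.
have gL1 : g (L + 1) = Bul k by rewrite addnC g_per.
have g'L : g' L = Bul k by rewrite -[L]add0n g'_per.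
have Qb : forall a x, is_box x -> admissible n I a x.
  by move=> a0 [//|i] _ m /noI.
case: (ltnP Y (c + 2)) => EY.
- case: Y EY hy hgy boxes => [|Y] EY hy hgy boxes.
  + rewrite g'0 in hgy; case: hgy => <-.
    case: (ltngtP t (c + 2)) => Et.
    * apply: Qb; apply: Cbox; lia.
    * have := boxes_at boxes (t' := c + 2) (j := c + 2); rewrite g'c2.
      by move=> /(_ ltac:(lia) ltac:(lia)).
    * by rewrite Et add0n g'c2.
  + by have := Cbox Y.+1 ltac:(lia); rewrite hgy.
- have HgY' : g Y = Bul a.
    case: (ltngtP Y (c + 2)) => E; [lia| |by rewrite E gc2 -g'c2 -E].
    by rewrite -same_after // ?hgy //; lia.
  case: (ltngtP (Y + t) L) => Et.
  + rewrite same_after; last lia. apply: hrule; [lia|lia|exact HgY'|] => t' Ht'.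
    rewrite -same_after; last lia. by apply: (boxes_at boxes (t' := t')); lia.
  + have := boxes_at boxes (t' := L - Y) (j := L); rewrite g'L.
    by move=> /(_ ltac:(lia) ltac:(lia)).
  + rewrite Et g'L.
    have := @hrule Y a t.+1 hy ltac:(lia) HgY'.
    rewrite (_ : Y + t.+1 = L + 1); last lia. rewrite gL1; apply.
    move=> t' Ht'; case: (ltngtP (Y + t') L) => E2.
    -- rewrite -same_after; last lia. by apply: (boxes_at boxes (t' := t')); lia.
    -- lia.
    -- by rewrite E2 gL.
Qed.

End Transitions.

Section Window.
Variables (L n : nat) (w : seq letter) (s : nat) (u v : seq letter).
Hypotheses (L_gt0 : 0 < L) (hw : Omega_unordered L n w) (hf : factor w s u).
Hypothesis hv : size v = size u.

Let size_w : size w = L.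
Proof. by case: hw. Qed.

Lemma window_periodic z : size z = L -> periodic L (fun j => at_ z (s %% L + j)).
Proof. by move=> <- j; rewrite addnA at_addn_size. Qed.

Lemma window_label j : 1 <= letter_label (at_ w (s %% L + j)) <= n.
Proof. exact: (at_label hw L_gt0). Qed.

Lemma window_old j : j < size u -> at_ w (s %% L + j) = nth (Box 0) u j.
Proof. by rewrite -size_w; exact: at_factor. Qed.

Lemma factor_labels : all (fun x => 1 <= letter_label x <= n) u.
Proof. by apply/(all_nthP (Box 0)) => j hj; rewrite -window_old // window_label. Qed.

Lemma window_new j : j < size u -> at_ (replace w s v) (s %% L + j) = nth (Box 0) v j.
Proof.
have [hu _] := hf; move=> hj.
by rewrite -size_w at_replace ?hv ?hj //; lia.
Qed.

Lemma window_out j : size u <= j < L ->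
  at_ (replace w s v) (s %% L + j) = at_ w (s %% L + j).
Proof.
have [hu _] := hf; move=> hj.
by rewrite -size_w at_replace ?hv; [rewrite ifN //; lia | lia | lia].
Qed.

End Window.

Lemma OmegaI_T1 L n I k w w' : 1 <= n <= L -> OmegaI L n I w -> T1 n k w w' ->
  OmegaI L n I w'.
Proof.
move=> hn hwI [s [i [ik [hf ->]]]].
have L_gt0 : 0 < L by lia.
have hw := Omega_unordered_of hwI.1.
have [/= hu _] := hf; have [size_w _ _] := hw.
apply: (OmegaI_replace hn hwI hf) => //.
  by have := factor_labels L_gt0 hw hf; rewrite /= !andbT andbC.
have old := window_old hw hf.
have new := window_new L_gt0 hw hf (v := [:: Box i; Bul k]) erefl.
have out := window_out L_gt0 hw hf (v := [:: Box i; Bul k]) erefl.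
move=> hrule; apply: (local_rule_T1 _ _ _ hrule (k := k) (i := i)) => /=.
- exact: window_periodic.
- by apply: window_periodic; rewrite size_replace.
- by move=> j; apply: window_label.
- lia.
- by rewrite old.
- by rewrite old.
- by rewrite new.
- by rewrite new.
- by move=> j hj; rewrite out //; lia.
- exact: ik.
Qed.

Lemma OmegaI_T3 L n I k w w' : 1 <= n <= L -> ~~ I k -> OmegaI L n I w -> T3 n k w w' ->
  OmegaI L n I w'.
Proof.
move=> hn Ik hwI [s [i [ik [hf ->]]]].
have L_gt0 : 0 < L by lia.
have hw := Omega_unordered_of hwI.1.
have [/= hu _] := hf; have [size_w _ _] := hw.
apply: (OmegaI_replace hn hwI hf) => //.
  by have := factor_labels L_gt0 hw hf; rewrite /= !andbT andbC.
have old := window_old hw hf.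
have new := window_new L_gt0 hw hf (v := [:: Bul k; Box i]) erefl.
have out := window_out L_gt0 hw hf (v := [:: Bul k; Box i]) erefl.
move=> hrule; apply: (local_rule_T3 _ _ _ hrule (k := k) (i := i)) => /=.
- exact: window_periodic.
- by apply: window_periodic; rewrite size_replace.
- by move=> j; apply: window_label.
- lia.
- by rewrite old.
- by rewrite old.
- by rewrite new.
- by rewrite new.
- by move=> j hj; rewrite out //; lia.
- exact: ik.
- exact: Ik.
Qed.

Lemma OmegaI_T2 L n I k w w' : 1 <= n <= L -> 1 <= k <= n -> OmegaI L n I w ->
  T2 n k w w' -> OmegaI L n I w'.
Proof.
move=> hn hk hwI [s [C [hC [hf ->]]]].
have L_gt0 : 0 < L by lia.
have hw := Omega_unordered_of hwI.1.
have [hu _] := hf; have [size_w _ _] := hw.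
rewrite /= size_cat /= in hu.
set u := Bul (prevl n k) :: _ in hf; set v := Bul (prevl n k) :: _.
have hv : size v = size u by rewrite /= !size_cat /= !addnS.
apply: (OmegaI_replace hn hwI hf hv).
- by move=> j /=; rewrite !count_cat /= !addn0 ?add0n.
- have := factor_labels L_gt0 hw hf; rewrite /u /v /= !all_cat /=.
  by case/and3P => _ -> /andP[->]; rewrite prevl_range.
have old := window_old hw hf; have new := window_new L_gt0 hw hf hv.
have out := window_out L_gt0 hw hf hv.
have size_u : size u = size C + 3 by rewrite /u /= size_cat /=; lia.
move=> hrule; apply: (local_rule_T2 _ _ hrule (c := size C) (p := prevl n k) (k := k)) => /=.
- exact: window_periodic.
- by apply: window_periodic; rewrite size_replace.
- lia.
- by rewrite old.
- by rewrite new.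
- rewrite old; last lia.
  by rewrite /u addn1 /= nth_cat ltnn subnn.
- rewrite old; last lia.
  by rewrite /u addn2 /= nth_cat ifN ?subSnn //; lia.
- by rewrite new //; lia.
- rewrite new; last lia.
  by rewrite /v addn2 /= nth_cat ltnn subnn.
- case=> [|j] hj; first lia.
  rewrite new ?old; try lia.
  by rewrite /u /v /= !nth_cat ifT ?ifT //; lia.
- case=> [|j] hj; first lia.
  rewrite old; last lia.
  rewrite /u /= nth_cat ifT; last lia.
  by move/(all_nthP (Box 0)): hC; apply; lia.
- by move=> j hj; rewrite out //; lia.
- by rewrite nextl_prevl.
Qed.

Lemma OmegaI_T4 L n I k w w' : 1 <= n <= L -> 1 <= k <= n -> ~~ I k ->
  (forall m, I m -> 1 <= m <= n) -> OmegaI L n I w -> T4 n k w w' -> OmegaI L n I w'.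
Proof.
move=> hn hk Ik HI hwI [s [C [hC [hf ->]]]].
have L_gt0 : 0 < L by lia.
have hw := Omega_unordered_of hwI.1.
have [size_w _ _] := hw.
set u := Box k :: _ in hf; set v := Bul k :: _.
have [hu _] := hf.
have size_u : size u = size C + 3 by rewrite /u /= size_cat /=; lia.
have hv : size v = size u by rewrite /u /v /= !size_cat /=; lia.
apply: (OmegaI_replace hn hwI hf hv).
- by move=> j /=; rewrite !count_cat /= !addn0 ?add0n.
- have := factor_labels L_gt0 hw hf; rewrite /u /v /= !all_cat /=.
  by case/and3P => -> _ /andP[-> /andP[-> _]].
have old := window_old hw hf; have new := window_new L_gt0 hw hf hv.
have out := window_out L_gt0 hw hf hv.
move=> hrule.
have g_per := window_periodic s size_w.
have g0 : at_ w (s %% L + 0) = Box k by rewrite old /u //=; lia.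
have g1 : at_ w (s %% L + 1) = Bul k by rewrite old /u //=; lia.
have noI m : ~ I m.
  move=> Im; move/negP: Ik; apply; suff <- : m = k by [].
  by apply: (local_rule_own_box g_per (window_label s L_gt0 hw) hrule _ g0 g1 Im (HI m Im)); lia.
apply: (local_rule_T4 g_per _ hrule (c := size C) (k := k) (q := nextl n k)) => //=.
- by apply: window_periodic; rewrite size_replace.
- lia.
- rewrite old; last lia.
  by rewrite /u addn2 /= nth_cat ltnn subnn.
- by rewrite new //; lia.
- rewrite new; last lia.
  by rewrite /v addn2 /= nth_cat ifN ?subSnn //; lia.
- case=> [|j] hj; first lia.
  rewrite new; last lia.
  rewrite /v /= nth_cat; case: ifP => [jC | _]; last by rewrite (_ : j - size C = 0) //; lia.
  by move/(all_nthP (Box 0)): hC; apply.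
- by move=> j hj; rewrite out //; lia.
Qed.

Theorem lemma5p4 (L n : nat) (I : pred nat) :
  1 <= n <= L ->
  (forall k, I k -> 1 <= k <= n) ->
  forall w w' : seq letter,
    OmegaI L n I w -> stepI n I w w' -> OmegaI L n I w'.
Proof.
move=> hn HI w w' hw [k [hk [T1k | [T2k | [Ik [T3k | T4k]]]]]].
- exact: OmegaI_T1 hn hw T1k.
- exact: OmegaI_T2 hn hk hw T2k.
- exact: OmegaI_T3 hn Ik hw T3k.
- exact: OmegaI_T4 hn hk Ik HI hw T4k.
Qed.
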